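(* For $\mu\in[\frac13,1)$ there exists a solution $f_\mu$ of $$(\mu-1)f_\mu(\xi)-\mu\,\xi f_\mu'(\xi)=f_\mu''(\xi),\qquad \xi\ge 0,$$ such that $f_\mu(0)=0$ and $f_\mu(\xi)\to 0$ as $\xi\to\infty$. This solution is positive, and: if $\mu\in(\frac13,1)$ then $f_\mu(\xi)=O(\xi^{1-\frac1\mu})$ as $\xi\to\infty$; for $\mu=\frac13$, $f_{1/3}(\xi)=\xi e^{-\xi^2/6}$. *)

From Stdlib Require Import Reals.
From Coquelicot Require Import Coquelicot.
Open Scope R_scope.

(* With s = mu xi^2 / 2 and a = (3 mu - 1) / (2 mu), the substitution
   f(xi) = xi e^(-s) M(a, 3/2, s) turns the equation into Kummer's equation
   s M'' + (3/2 - s) M' - a M = 0, which is solved by the entire series M(a, 3/2, .).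
   For 0 <= a <= 1 its coefficients are nonnegative, so M >= 1 and f > 0; for mu = 1/3,
   a = 0 and M = 1.  Comparing coefficients gives s (M' - M) + (3/2 - a) M <= 3/2 - a,
   which makes s^(3/2 - a) e^(-s) M(s) + (3/2 - a) (s + 1) e^(-s) nonincreasing on
   [1, +oo).  Hence e^(-s) M(s) = O(s^(a - 3/2)), i.e. f(xi) = O(xi^(2a - 2)) =
   O(xi^(1 - 1/mu)), and f tends to 0. *)

From Stdlib Require Import Reals Lra Factorial.
From Coquelicot Require Import Coquelicot.
Open Scope R_scope.

Lemma is_pseries_ge_coef0 (u : nat -> R) x l :
  is_pseries u x l -> 0 <= x -> (forall n, 0 <= u (S n)) -> u O <= l.
Proof.
  intros Hu Hx Hpos.
  refine (is_lim_seq_le (fun _ => u O) _ (u O) l _ (is_lim_seq_const _) Hu).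
  induction n as [|n IH].
  - rewrite sum_O, pow_n_pow. change (u O <= 1 * u O). lra.
  - rewrite sum_Sn, pow_n_pow.
    change (u O <= sum_n (fun k => scal (pow_n x k) (u k)) n + x ^ S n * u (S n)).
    assert (0 <= x ^ S n * u (S n)) by (apply Rmult_le_pos; [apply pow_le|]; auto).
    set (S := sum_n _ n) in *. lra.
Qed.

Lemma is_pseries_le_coef0 (u : nat -> R) x l :
  is_pseries u x l -> 0 <= x -> (forall n, u (S n) <= 0) -> l <= u O.
Proof.
  intros Hu Hx Hneg.
  assert (H := is_pseries_ge_coef0 _ _ _ (is_pseries_opp _ _ _ Hu) Hx).
  unfold PS_opp in H. change opp with Ropp in H.
  enough (- u O <= - l) by lra.
  apply H. intros n. specialize (Hneg n). lra.
Qed.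

Lemma CV_radius_infinite_le (u v : nat -> R) :
  (forall n, Rabs (u n) <= Rabs (v n)) -> CV_radius v = p_infty -> CV_radius u = p_infty.
Proof.
  intros Huv Hv.
  assert (Hsub : forall r, (exists M, forall n, Rabs (v n * r ^ n) <= M) ->
     exists M, forall n, Rabs (u n * r ^ n) <= M).
  { intros r [M HM]. exists M. intros n. eapply Rle_trans; [|apply (HM n)].
    rewrite !Rabs_mult. apply Rmult_le_compat_r; [apply Rabs_pos|apply Huv]. }
  assert (Hle := is_lub_Rbar_subset _ _ _ _ Hsub (CV_radius_bounded u) (CV_radius_bounded v)).
  rewrite Hv in Hle. destruct (CV_radius u); simpl in Hle; easy.
Qed.

Lemma is_pseries_entire (u : nat -> R) x :
  CV_radius u = p_infty -> is_pseries u x (PSeries u x).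
Proof. intros Hu. apply PSeries_correct, CV_radius_inside. rewrite Hu. exact I. Qed.

Lemma le_of_is_derive_nonpos (g dg : R -> R) x y : x <= y ->
  (forall t, x <= t <= y -> is_derive g t (dg t)) ->
  (forall t, x <= t <= y -> dg t <= 0) -> g y <= g x.
Proof.
  intros Hxy Hd Hneg.
  destruct (MVT_gen g x y dg) as [t [Ht Hmvt]];
    rewrite ?Rmin_left, ?Rmax_right in * by lra.
  - intros t Ht. apply Hd. lra.
  - intros t Ht. apply derivable_continuous_pt. exists (dg t).
    apply is_derive_Reals, Hd. lra.
  - assert (dg t * (y - x) <= 0) by (apply Rmult_le_0_r; [apply Hneg|]; lra). lra.
Qed.

Lemma is_derive_Rpower_l x e : 0 < x ->
  is_derive (fun t => Rpower t e) x (e * Rpower x (e - 1)).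
Proof. intros Hx. apply is_derive_Reals, derivable_pt_lim_power, Hx. Qed.

Lemma Rpower_1_l e : Rpower 1 e = 1.
Proof. unfold Rpower. rewrite ln_1, Rmult_0_r. apply exp_0. Qed.

Lemma is_lim_Rpower_neg e : e < 0 -> is_lim (fun x => Rpower x e) p_infty 0.
Proof.
  intros He. apply (is_lim_ext (fun x => exp (e * ln x))); [reflexivity|].
  apply (is_lim_comp exp (fun x => e * ln x) p_infty 0 m_infty).
  - exact is_lim_exp_m.
  - assert (H := is_lim_scal_l ln e p_infty p_infty is_lim_ln_p).
    replace (Rbar_mult e p_infty) with m_infty in H; [exact H|].
    simpl. destruct (Rle_dec 0 e); [exfalso; lra|reflexivity].
  - exists 0. intros y _ Hy. discriminate.
Qed.

Lemma is_lim_0_of_Rpower_bound (f : R -> R) C M e : e < 0 ->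
  (forall x, M <= x -> 0 <= f x <= C * Rpower x e) -> is_lim f p_infty 0.
Proof.
  intros He Hf.
  apply (is_lim_le_le_loc (fun _ => 0) (fun x => C * Rpower x e)).
  - exists M. intros x Hx. apply Hf. lra.
  - apply is_lim_const.
  - assert (H := is_lim_scal_l _ C p_infty 0 (is_lim_Rpower_neg e He)).
    replace (Rbar_mult C 0) with (Finite 0) in H; [exact H|].
    simpl. f_equal. ring.
Qed.

(* Coefficients of Kummer's function M(a, b, z) = sum_n (a)_n / ((b)_n n!) z^n. *)
Fixpoint kummer_coef (a b : R) (n : nat) : R :=
  match n with
  | O => 1
  | S k => kummer_coef a b k * (a + INR k) / ((b + INR k) * INR (S k))
  end.

Lemma kummer_coef_S a b n :
  kummer_coef a b (S n) = kummer_coef a b n * (a + INR n) / ((b + INR n) * INR (S n)).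
Proof. reflexivity. Qed.

Definition kummerM (a b s : R) : R := PSeries (kummer_coef a b) s.
Definition dkummerM (a b s : R) : R := PSeries (PS_derive (kummer_coef a b)) s.
Definition d2kummerM (a b s : R) : R := PSeries (PS_derive (PS_derive (kummer_coef a b))) s.

Section Kummer.

Variables a b : R.
Hypothesis hb : 0 < b.
Hypothesis ha : 0 <= a <= b.

Lemma kummer_coef_rec n :
  (b + INR n) * INR (S n) * kummer_coef a b (S n) = (a + INR n) * kummer_coef a b n.
Proof.
  rewrite kummer_coef_S. assert (0 <= INR n) by apply pos_INR.
  rewrite S_INR. field. lra.
Qed.

Lemma kummer_coef_ge0 n : 0 <= kummer_coef a b n.
Proof.
  induction n as [|n IH]; [simpl; lra|]. rewrite kummer_coef_S, S_INR.
  assert (0 <= INR n) by apply pos_INR.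
  apply Rmult_le_pos; [apply Rmult_le_pos; lra|].
  apply Rlt_le, Rinv_0_lt_compat. nra.
Qed.

Lemma kummer_coef_le_inv_fact n : kummer_coef a b n <= / INR (fact n).
Proof.
  induction n as [|n IH]; [simpl; lra|]. rewrite kummer_coef_S.
  assert (0 <= INR n) by apply pos_INR.
  assert (0 < INR (fact n)) by apply INR_fact_lt_0.
  assert (Hratio : 0 <= (a + INR n) / (b + INR n) <= 1).
  { split; [apply Rdiv_le_0_compat; lra|].
    apply (Rdiv_le_1 (a + INR n) (b + INR n)); lra. }
  assert (HA := kummer_coef_ge0 n).
  rewrite fact_simpl, mult_INR, S_INR.
  replace (kummer_coef a b n * (a + INR n) / ((b + INR n) * (INR n + 1)))
    with (/ (INR n + 1) * (kummer_coef a b n * ((a + INR n) / (b + INR n)))) by (field; lra).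
  rewrite Rinv_mult.
  apply Rmult_le_compat_l; [apply Rlt_le, Rinv_0_lt_compat; lra|]. nra.
Qed.

Lemma CV_radius_kummer_coef : CV_radius (kummer_coef a b) = p_infty.
Proof.
  apply (CV_radius_infinite_le _ (fun n => / INR (fact n))).
  - intros n. rewrite !Rabs_pos_eq.
    + apply kummer_coef_le_inv_fact.
    + apply Rlt_le, Rinv_0_lt_compat, INR_fact_lt_0.
    + apply kummer_coef_ge0.
  - apply CV_radius_infinite_DAlembert.
    + intros n. apply Rinv_neq_0_compat, INR_fact_neq_0.
    + apply is_lim_seq_Reals. exact Alembert_exp.
Qed.

Lemma is_derive_kummerM s : is_derive (kummerM a b) s (dkummerM a b s).
Proof. apply is_derive_PSeries. rewrite CV_radius_kummer_coef. exact I. Qed.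

Lemma is_derive_dkummerM s : is_derive (dkummerM a b) s (d2kummerM a b s).
Proof.
  apply is_derive_PSeries. rewrite CV_radius_derive, CV_radius_kummer_coef. exact I.
Qed.

Lemma kummerM_ode s :
  s * d2kummerM a b s + (b - s) * dkummerM a b s - a * kummerM a b s = 0.
Proof.
  set (A := kummer_coef a b).
  assert (E0 := is_pseries_entire A s CV_radius_kummer_coef).
  assert (E1 := is_pseries_entire (PS_derive A) s
                  ltac:(rewrite CV_radius_derive; exact CV_radius_kummer_coef)).
  assert (E2 := is_pseries_entire (PS_derive (PS_derive A)) s
                  ltac:(rewrite !CV_radius_derive; exact CV_radius_kummer_coef)).
  assert (E := is_pseries_plus _ _ _ _ _
     (is_pseries_plus _ _ _ _ _ (is_pseries_incr_1 _ _ _ E2)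
        (is_pseries_scal b _ _ _ (Rmult_comm _ _) E1))
     (is_pseries_plus _ _ _ _ _
        (is_pseries_scal (-1) _ _ _ (Rmult_comm _ _) (is_pseries_incr_1 _ _ _ E1))
        (is_pseries_scal (-a) _ _ _ (Rmult_comm _ _) E0))).
  apply is_pseries_ext with (b := fun _ => 0) in E.
  - apply is_pseries_unique in E. rewrite PSeries_const_0 in E.
    unfold kummerM, dkummerM, d2kummerM. fold A. rewrite E.
    change plus with Rplus. change scal with Rmult. unfold mult. simpl. ring.
  - intros n. unfold PS_plus, PS_scal, PS_incr_1, PS_derive.
    change plus with Rplus. change scal with Rmult. unfold mult.
    destruct n as [|k]; cbn -[INR kummer_coef].
    + change (zero : R) with 0. unfold A. simpl. field. lra.
    + assert (HR := kummer_coef_rec (S k)). fold A in HR.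
      rewrite !S_INR in *. nra.
Qed.

Lemma kummerM_ge1 s : 0 <= s -> 1 <= kummerM a b s.
Proof.
  intros Hs.
  apply (is_pseries_ge_coef0 _ _ _ (is_pseries_entire _ s CV_radius_kummer_coef) Hs).
  intros n. apply kummer_coef_ge0.
Qed.

Lemma kummerM_tail_le (ha1 : a <= 1) s : 0 <= s ->
  s * (dkummerM a b s - kummerM a b s) + (b - a) * kummerM a b s <= b - a.
Proof.
  intros Hs. set (A := kummer_coef a b).
  assert (E0 := is_pseries_entire A s CV_radius_kummer_coef).
  assert (E1 := is_pseries_entire (PS_derive A) s
                  ltac:(rewrite CV_radius_derive; exact CV_radius_kummer_coef)).
  assert (E := is_pseries_plus _ _ _ _ _
     (is_pseries_incr_1 _ _ _
        (is_pseries_plus _ _ _ _ _ E1 (is_pseries_scal (-1) _ _ _ (Rmult_comm _ _) E0)))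
     (is_pseries_scal (b - a) _ _ _ (Rmult_comm _ _) E0)).
  apply (is_pseries_le_coef0 _ _ _ E) in Hs.
  - unfold kummerM, dkummerM. fold A.
    change plus with Rplus in Hs. change scal with Rmult in Hs. unfold mult in Hs.
    cbn -[INR PSeries A] in Hs. change (A O) with 1 in Hs. lra.
  - intros k. unfold PS_plus, PS_scal, PS_incr_1, PS_derive.
    change plus with Rplus. change scal with Rmult. unfold mult. cbn -[INR A].
    assert (HR := kummer_coef_rec k). fold A in HR.
    assert (HA := kummer_coef_ge0 k). fold A in HA.
    assert (Hk := pos_INR k). rewrite S_INR in *.
    assert (Hcoef : (b + INR k) * (INR k + 1)
        * ((INR k + 1) * A (S k) + -1 * A k + (b - a) * A (S k))
        = - ((1 - a) * (b - a)) * A k) by nra.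
    assert (0 <= (1 - a) * (b - a) * A k) by (apply Rmult_le_pos; [apply Rmult_le_pos|]; lra).
    assert (0 < (b + INR k) * (INR k + 1)) by nra.
    nra.
Qed.

Lemma kummerM_decay (ha1 : a <= 1) (hba : b - a <= 2) s : 1 <= s ->
  Rpower s (b - a) * exp (- s) * kummerM a b s <= kummerM a b 1 + 2 * (b - a).
Proof.
  intros Hs. set (e := b - a). set (M := kummerM a b). set (dM := dkummerM a b).
  set (G := fun x => Rpower x e * exp (- x) * M x + e * (x + 1) * exp (- x)).
  set (dG := fun x => exp (- x) * (Rpower x (e - 1) * (x * (dM x - M x) + e * M x) - e * x)).
  assert (HdG : forall x, 0 < x -> is_derive G x (dG x)).
  { intros x Hx. unfold G, dG. auto_derive.
    - repeat split; eexists; [apply is_derive_Rpower_l, Hx | apply is_derive_kummerM].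
    - replace (Derive (fun t => Rpower t e) x) with (e * Rpower x (e - 1))
        by (symmetry; apply is_derive_unique, is_derive_Rpower_l, Hx).
      replace (Derive (fun t => M t) x) with (dM x)
        by (symmetry; apply is_derive_unique, is_derive_kummerM).
      replace (Rpower x e) with (x * Rpower x (e - 1))
        by (rewrite <- (Rpower_1 x) at 1 by exact Hx; rewrite <- Rpower_plus; f_equal; ring).
      ring. }
  assert (HdG_nonpos : forall x, 1 <= x -> dG x <= 0).
  { intros x Hx. unfold dG.
    assert (Hpow : Rpower x (e - 1) <= x).
    { rewrite <- (Rpower_1 x) at 2 by lra. apply Rle_Rpower; unfold e; lra. }
    assert (Htail := kummerM_tail_le ha1 x ltac:(lra)). fold e M dM in Htail.
    assert (0 < Rpower x (e - 1)) by apply exp_pos.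
    assert (Rpower x (e - 1) * (x * (dM x - M x) + e * M x) <= Rpower x (e - 1) * e)
      by (apply Rmult_le_compat_l; lra).
    assert (Rpower x (e - 1) * e <= x * e)
      by (apply Rmult_le_compat_r; [unfold e; lra | exact Hpow]).
    assert (0 < exp (- x)) by apply exp_pos.
    nra. }
  assert (HGs : G s <= G 1).
  { apply (le_of_is_derive_nonpos G dG); [exact Hs| |].
    - intros t Ht. apply HdG. lra.
    - intros t Ht. apply HdG_nonpos. lra. }
  assert (HG1 : G 1 <= M 1 + 2 * e).
  { unfold G. rewrite Rpower_1_l.
    assert (exp (- (1)) <= 1) by (rewrite <- exp_0 at 2; apply Rlt_le, exp_increasing; lra).
    assert (0 < exp (- (1))) by apply exp_pos.
    assert (1 <= M 1) by (apply kummerM_ge1; lra).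
    assert (0 <= e) by (unfold e; lra).
    nra. }
  assert (0 <= e * (s + 1) * exp (- s)).
  { apply Rmult_le_pos; [apply Rmult_le_pos|apply Rlt_le, exp_pos]; unfold e; lra. }
  unfold G in *. fold e M. lra.
Qed.

End Kummer.

Lemma kummerM_a0 b s : 0 < b -> 0 <= s -> kummerM 0 b s = 1.
Proof.
  intros hb Hs. assert (ha : 0 <= 0 <= b) by lra.
  apply Rle_antisym; [|exact (kummerM_ge1 0 b hb ha s Hs)].
  apply (is_pseries_le_coef0 _ _ _ (is_pseries_entire _ s (CV_radius_kummer_coef 0 b hb ha)) Hs).
  intros n. apply Req_le.
  induction n as [|n IH]; rewrite kummer_coef_S, Rplus_0_l.
  - simpl. lra.
  - rewrite IH. unfold Rdiv. lra.
Qed.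

Definition kummer_a (mu : R) : R := (3 * mu - 1) / (2 * mu).

Definition fmu (mu xi : R) : R :=
  xi * exp (- (mu * xi ^ 2 / 2)) * kummerM (kummer_a mu) (3/2) (mu * xi ^ 2 / 2).

Definition dfmu (mu xi : R) : R :=
  let s := mu * xi ^ 2 / 2 in let a := kummer_a mu in
  exp (- s) * (kummerM a (3/2) s + mu * xi ^ 2 * (dkummerM a (3/2) s - kummerM a (3/2) s)).

Definition d2fmu (mu xi : R) : R :=
  let s := mu * xi ^ 2 / 2 in let a := kummer_a mu in
  - mu * xi * dfmu mu xi
  + exp (- s) * (3 * mu * xi * dkummerM a (3/2) s - 2 * mu * xi * kummerM a (3/2) s
                 + mu ^ 2 * xi ^ 3 * (d2kummerM a (3/2) s - dkummerM a (3/2) s)).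

Lemma fmu_one_third xi : 0 <= xi -> fmu (1/3) xi = xi * exp (- xi ^ 2 / 6).
Proof.
  intros Hxi. unfold fmu.
  replace (kummer_a (1/3)) with 0 by (unfold kummer_a; field).
  rewrite kummerM_a0 by nra. rewrite Rmult_1_r. do 2 f_equal. field.
Qed.

Section SimilaritySolution.

Variable mu : R.
Hypothesis hmu : 1/3 <= mu < 1.

Lemma kummer_a_range : 0 <= kummer_a mu <= 1.
Proof.
  unfold kummer_a. split.
  - apply Rdiv_le_0_compat; lra.
  - apply (Rdiv_le_1 (3 * mu - 1) (2 * mu)); lra.
Qed.

Let hb : 0 < 3/2. Proof. lra. Qed.
Let ha : 0 <= kummer_a mu <= 3/2. Proof. generalize kummer_a_range. lra. Qed.

Lemma is_derive_fmu xi : is_derive (fmu mu) xi (dfmu mu xi).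
Proof.
  unfold fmu, dfmu. auto_derive.
  - repeat split. exists (dkummerM (kummer_a mu) (3/2) (mu * xi ^ 2 / 2)).
    apply is_derive_kummerM; assumption.
  - replace (mu * (xi * (xi * 1)) * / 2) with (mu * xi ^ 2 / 2) by field.
    rewrite (is_derive_unique _ _ _ (is_derive_kummerM _ _ hb ha _)).
    field.
Qed.

Lemma is_derive_dfmu xi : is_derive (dfmu mu) xi (d2fmu mu xi).
Proof.
  unfold d2fmu, dfmu. cbv zeta. auto_derive.
  - repeat split; eexists;
      [apply is_derive_kummerM | apply is_derive_dkummerM | apply is_derive_kummerM];
      assumption.
  - replace (mu * (xi * (xi * 1)) * / 2) with (mu * xi ^ 2 / 2) by field.
    rewrite (is_derive_unique _ _ _ (is_derive_kummerM _ _ hb ha _)).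
    rewrite (is_derive_unique _ _ _ (is_derive_dkummerM _ _ hb ha _)).
    field.
Qed.

(* (mu - 1) f - mu xi f' - f'' = -2 mu xi e^(-s) (s M'' + (3/2 - s) M' - a M) with
   s = mu xi^2 / 2 and a = kummer_a mu. *)
Lemma fmu_ode xi : (mu - 1) * fmu mu xi - mu * xi * dfmu mu xi = d2fmu mu xi.
Proof.
  unfold d2fmu, fmu. cbv zeta.
  set (a := kummer_a mu). set (s := mu * xi ^ 2 / 2). set (E := exp (- s)).
  set (M := kummerM a (3/2) s). set (D := dkummerM a (3/2) s). set (D2 := d2kummerM a (3/2) s).
  assert (K := kummerM_ode a (3/2) hb ha s). fold M D D2 in K.
  assert (Ha : 2 * mu * a = 3 * mu - 1) by (unfold a, kummer_a; field; lra).
  assert (H1 : 2 * mu * xi * E * (s * D2 + (3/2 - s) * D - a * M) = 0) by (rewrite K; ring).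
  assert (H2 : xi * E * M * (2 * mu * a - 3 * mu + 1) = 0) by (rewrite Ha; ring).
  unfold s in H1. lra.
Qed.

Lemma fmu_pos xi : 0 < xi -> 0 < fmu mu xi.
Proof.
  intros Hxi. unfold fmu.
  assert (1 <= kummerM (kummer_a mu) (3/2) (mu * xi ^ 2 / 2)) by (apply kummerM_ge1; auto; nra).
  assert (0 < exp (- (mu * xi ^ 2 / 2))) by apply exp_pos.
  apply Rmult_lt_0_compat; [apply Rmult_lt_0_compat|]; lra.
Qed.

Lemma fmu_bound :
  exists C, forall xi, 3 <= xi -> 0 <= fmu mu xi <= C * Rpower xi (1 - 1 / mu).
Proof.
  set (a := kummer_a mu). set (e := 3/2 - a). set (K := kummerM a (3/2) 1 + 2 * e).
  exists (K * Rpower (mu / 2) (- e)). intros xi Hxi.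
  assert (Ha := kummer_a_range). fold a in Ha.
  set (s := mu * xi ^ 2 / 2). set (E := exp (- s)). set (M := kummerM a (3/2) s).
  assert (Hs : 1 <= s) by (unfold s; nra).
  assert (HM : 1 <= M) by (apply kummerM_ge1; auto; lra).
  assert (HE : 0 < E) by apply exp_pos.
  assert (Hdecay := kummerM_decay a (3/2) hb ha ltac:(lra) ltac:(lra) s Hs).
  fold M E e K in Hdecay.
  assert (HEM : E * M <= K * Rpower s (- e)).
  { rewrite Rpower_Ropp. assert (0 < Rpower s e) by apply exp_pos.
    apply (Rmult_le_reg_l (Rpower s e)); [assumption|].
    replace (Rpower s e * (K * / Rpower s e)) with K by (field; lra). lra. }
  assert (Hpow : xi * Rpower s (- e) = Rpower (mu / 2) (- e) * Rpower xi (1 - 1 / mu)).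
  { replace s with (mu / 2 * Rpower xi (INR 2)) by (rewrite Rpower_pow by lra; unfold s; field).
    rewrite <- Rpower_mult_distr by (try apply exp_pos; lra).
    rewrite Rpower_mult.
    replace (Rpower xi (1 - 1 / mu)) with (xi * Rpower xi (INR 2 * - e)); [ring|].
    rewrite <- (Rpower_1 xi) at 1 by lra. rewrite <- Rpower_plus.
    f_equal. unfold e, a, kummer_a. simpl. field. lra. }
  unfold fmu. fold a s E M. split.
  - apply Rmult_le_pos; [apply Rmult_le_pos|]; lra.
  - rewrite (Rmult_assoc K), <- Hpow, Rmult_assoc.
    replace (K * (xi * Rpower s (- e))) with (xi * (K * Rpower s (- e))) by ring.
    apply Rmult_le_compat_l; lra.
Qed.

End SimilaritySolution.

Theorem proposition2p1 (mu : R) (Hmu : 1 / 3 <= mu < 1) :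
  exists f df d2f : R -> R,
    (* f solves (mu-1) f - mu xi f' = f'' on xi >= 0 *)
    (forall xi, 0 <= xi ->
       is_derive f xi (df xi) /\ is_derive df xi (d2f xi) /\
       (mu - 1) * f xi - mu * xi * df xi = d2f xi) /\
    f 0 = 0 /\
    is_lim f p_infty 0 /\
    (* positivity *)
    (forall xi, 0 < xi -> 0 < f xi) /\
    (* asymptotics for mu in (1/3,1) *)
    (1 / 3 < mu ->
       exists C M : R, 0 < M /\
         forall xi, M <= xi -> Rabs (f xi) <= C * Rpower xi (1 - 1 / mu)) /\
    (* explicit form for mu = 1/3 *)
    (mu = 1 / 3 -> forall xi, 0 <= xi -> f xi = xi * exp (- xi ^ 2 / 6)).
Proof.
  destruct (fmu_bound mu Hmu) as [C HC].
  assert (Hexp : 1 - 1 / mu < 0).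
  { enough (1 < 1 / mu) by lra. apply (Rmult_lt_reg_r mu); [lra|]. field_simplify; lra. }
  exists (fmu mu), (dfmu mu), (d2fmu mu).
  split; [|split; [|split; [|split; [|split]]]].
  - intros xi _. split; [|split].
    + apply is_derive_fmu, Hmu.
    + apply is_derive_dfmu, Hmu.
    + apply fmu_ode, Hmu.
  - unfold fmu. ring.
  - exact (is_lim_0_of_Rpower_bound _ C 3 _ Hexp HC).
  - exact (fmu_pos mu Hmu).
  - intros _. exists C, 3. split; [lra|].
    intros xi Hxi. destruct (HC xi Hxi). rewrite Rabs_pos_eq; assumption.
  - intros -> xi Hxi. exact (fmu_one_third xi Hxi).
Qed.
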